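(* Let $\mathcal{G}$ be an $m$-uniform $k$-regular hypergraph with $n$ vertices, and let $\theta=\binom{n-2}{m-2}/(m-1)$. Then the minimum eigenvalue $\lambda_n$ of $A_{\mathcal{G}}$ satisfies $\lambda_n\ge k-\theta-\binom{n-1}{m-1}$.
   Context: A hypergraph $\mathcal{G}=(V,E)$ has a finite vertex set $V$ and a set $E$ of subsets of $V$ (edges), each of cardinality at least $2$; it is $m$-uniform if every edge has exactly $m$ vertices, and $k$-regular if every vertex lies in exactly $k$ edges. The adjacency matrix $A_{\mathcal{G}}$ has $(A_{\mathcal{G}})_{ij}=\sum_{e\in E,\, i,j\in e}\frac{1}{|e|-1}$ for $i\ne j$ and zero diagonal. *)

From HB Require Import structures.
From mathcomp Require Import all_boot all_order all_algebra.
Set Implicit Arguments. Unset Strict Implicit. Unset Printing Implicit Defensive.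
Import Order.TTheory GRing.Theory Num.Theory.
Local Open Scope ring_scope.

Definition is_hypergraph (n : nat) (E : {set {set 'I_n}}) : Prop :=
  forall e, e \in E -> (2 <= #|e|)%N.

Definition uniform (n m : nat) (E : {set {set 'I_n}}) : Prop :=
  forall e, e \in E -> #|e| = m.

Definition regular (n k : nat) (E : {set {set 'I_n}}) : Prop :=
  forall v : 'I_n, #|[set e in E | v \in e]| = k.

Definition hadj (R : fieldType) (n : nat) (E : {set {set 'I_n}}) : 'M[R]_n :=
  \matrix_(i, j) (if i != j then
                    \sum_(e in E | (i \in e) && (j \in e)) ((#|e| - 1)%N%:R)^-1
                  else 0).

From HB Require Import structures.
From mathcomp Require Import all_boot all_order all_algebra ring lra.
Set Implicit Arguments. Unset Strict Implicit. Unset Printing Implicit Defensive.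
Import Order.TTheory GRing.Theory Num.Theory.

(* For an eigenvector x of A with eigenvalue lambda, uniformity turns the
   Rayleigh quotient into (m - 1) lambda |x|^2 = sum_(e in E) c(e), where
   c(S) = sum_(i <> j in S) x_i x_j.  Over all m-subsets S of the vertices,
   the c(S) add up to 'C(n-2, m-2) sum_(i <> j) x_i x_j
   >= - 'C(n-2, m-2) |x|^2, while for each m-subset S that is not an edge,
   Cauchy-Schwarz gives c(S) <= (m - 1) sum_(i in S) x_i^2; by regularity
   these squares add up to ('C(n-1, m-1) - k) |x|^2 over the non-edges.
   Subtracting the non-edges from all m-subsets bounds sum_(e in E) c(e)
   from below. *)

Lemma card_supsets_of_card (T : finType) (A : {set T}) (m : nat) :
  #|A| <= m ->
  #|[set S : {set T} | A \subset S & #|S| == m]| = 'C(#|T| - #|A|, m - #|A|).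
Proof.
move=> leAm; rewrite -[#|T|](cardsC A) addKn -cards_draws.
rewrite -(@card_in_imset _ _ (fun S => S :\: A)); last first.
  move=> S1 S2; rewrite !inE => /andP[/setIidPr AS1 _] /andP[/setIidPr AS2 _] eqS.
  by rewrite -(setID S1 A) -(setID S2 A) AS1 AS2 eqS.
apply: eq_card => S'; rewrite inE; apply/imsetP/andP => [[S]|[S'A /eqP cardS']].
  rewrite inE => /andP[AS /eqP <-] ->.
  by rewrite setDE subsetIr -setDE cardsD (setIidPr AS).
have disS'A : [disjoint S' & A] by rewrite disjoints_subset.
exists (S' :|: A); last by rewrite setDUl setDv setU0 (setDidPl disS'A).
rewrite inE subsetUr cardsU.
have /eqP -> : S' :&: A == set0 by rewrite setI_eq0.
by rewrite cards0 subn0 cardS' (subnK leAm) eqxx.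
Qed.

Local Open Scope ring_scope.

Section SubsetSums.
Variables (R : pzSemiRingType) (T : finType) (x : T -> R).

Definition sum_sqr (e : {set T}) : R := \sum_(i in e) x i ^+ 2.
Definition sum_cross (e : {set T}) : R := \sum_(i in e) \sum_(j in e | j != i) x i * x j.

Lemma sum_sum_sqr (F : {set {set T}}) (a : nat) :
  (forall i, #|[set S in F | i \in S]| = a) ->
  \sum_(S in F) sum_sqr S = sum_sqr setT *+ a.
Proof.
move=> degF; rewrite /sum_sqr (exchange_big_dep predT) //= -sumrMnl.
apply: eq_big => [i|i _]; first by rewrite inE.
by rewrite -(degF i) -sumr_const; apply: eq_bigl => S; rewrite inE.
Qed.

Lemma sum_sum_cross (F : {set {set T}}) (b : nat) :
  (forall i j, i != j -> #|[set S in F | (i \in S) && (j \in S)]| = b) ->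
  \sum_(S in F) sum_cross S = sum_cross setT *+ b.
Proof.
move=> codegF; rewrite /sum_cross (exchange_big_dep predT) //= -sumrMnl.
apply: eq_big => [i|i _]; first by rewrite inE.
rewrite (exchange_big_dep (fun j => j != i)) /=; last by move=> S j _ /andP[].
rewrite -sumrMnl; apply: eq_big => [j|j neji]; first by rewrite inE.
rewrite -(codegF i j) 1?eq_sym // -sumr_const; apply: eq_bigl => S.
by rewrite inE eq_sym neji andbT andbA.
Qed.
End SubsetSums.

Lemma sum_crossE (R : comPzRingType) (T : finType) (x : T -> R) (e : {set T}) :
  sum_cross x e = (\sum_(i in e) x i) ^+ 2 - sum_sqr x e.
Proof.
apply/eqP; rewrite eq_sym subr_eq addrC /sum_sqr /sum_cross -big_split /=.
rewrite expr2 big_distrl /=; apply/eqP/eq_bigr => i ie.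
by rewrite big_distrr (bigD1 i) //= expr2.
Qed.

Section RealSubsetSums.
Variables (R : realDomainType) (T : finType) (x : T -> R).

Lemma sum_sqr_ge0 (e : {set T}) : 0 <= sum_sqr x e.
Proof. by apply: sumr_ge0 => i _; apply: sqr_ge0. Qed.

Lemma sqr_sum_le (e : {set T}) : (\sum_(i in e) x i) ^+ 2 <= #|e|%:R * sum_sqr x e.
Proof.
have sum_sqr_diff : \sum_(i in e) \sum_(j in e) (x i - x j) ^+ 2 =
    (#|e|%:R * sum_sqr x e - (\sum_(i in e) x i) ^+ 2) *+ 2.
  have -> : \sum_(i in e) \sum_(j in e) (x i - x j) ^+ 2 =
      \sum_(i in e) \sum_(j in e) (x i ^+ 2 + x j ^+ 2) -
      (\sum_(i in e) \sum_(j in e) x i * x j) *+ 2.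
    rewrite -sumrMnl -sumrB; apply: eq_bigr => i _.
    by rewrite -sumrMnl -sumrB; apply: eq_bigr => j _; rewrite sqrrB addrAC.
  rewrite expr2 big_distrlr /= mulrnBl; congr (_ - _).
  under eq_bigr do rewrite big_split /= sumr_const -/(sum_sqr x e).
  rewrite big_split /= sumr_const sumrMnl -/(sum_sqr x e).
  by rewrite mulr_natl mulr2n.
have : 0 <= \sum_(i in e) \sum_(j in e) (x i - x j) ^+ 2.
  by do 2![apply: sumr_ge0 => ? _]; apply: sqr_ge0.
by rewrite sum_sqr_diff pmulrn_lge0 // subr_ge0.
Qed.

Lemma sum_cross_ge (e : {set T}) : - sum_sqr x e <= sum_cross x e.
Proof. by rewrite sum_crossE -[leLHS]add0r lerD2r sqr_ge0. Qed.

Lemma sum_cross_le (e : {set T}) : sum_cross x e <= (#|e| - 1)%:R * sum_sqr x e.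
Proof.
have := sqr_sum_le e; rewrite sum_crossE.
have [e0|e_gt0] := posnP #|e|.
  by rewrite e0 mul0r; have := sum_sqr_ge0 e; lra.
by rewrite natrB // mulrBl mul1r lerD2r.
Qed.
End RealSubsetSums.

Lemma hadj_quadratic_form (R : fieldType) (n : nat) (E : {set {set 'I_n}})
    (x : 'I_n -> R) :
  \sum_i \sum_j x i * x j * hadj R E i j =
  \sum_(e in E) ((#|e| - 1)%:R)^-1 * sum_cross x e.
Proof.
pose F e i j : R := if [&& e \in E, i \in e, j \in e & j != i]
                    then ((#|e| - 1)%:R)^-1 * (x i * x j) else 0.
transitivity (\sum_i \sum_j \sum_e F e i j).
  apply: eq_bigr => i _; apply: eq_bigr => j _; rewrite mxE eq_sym.
  case: eqP => [->|/eqP neji].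
    by rewrite mulr0 big1 // => e _; rewrite /F eqxx !andbF.
  rewrite mulr_sumr big_mkcond /=; apply: eq_bigr => e _.
  by rewrite /F neji andbT; case: ifP => // _; rewrite mulrC.
under eq_bigr do rewrite exchange_big /=.
rewrite exchange_big [RHS]big_mkcond /=; apply: eq_big => // e _.
rewrite /F; case: (e \in E); last by rewrite big1 // => i _; rewrite big1.
rewrite /sum_cross mulr_sumr [RHS]big_mkcond /=; apply: eq_bigr => i _.
case: (i \in e); last by rewrite big1.
by rewrite mulr_sumr [RHS]big_mkcond /=; apply: eq_bigr => j _; case: ifP.
Qed.

Lemma eigenvector_quadratic_form (R : comPzRingType) (n : nat) (A : 'M[R]_n)
    (v : 'rV[R]_n) (lambda : R) :
  v *m A = lambda *: v ->
  \sum_i \sum_j v 0 i * v 0 j * A i j = lambda * sum_sqr (v 0) setT.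
Proof.
move=> eigv; rewrite exchange_big /sum_sqr mulr_sumr /=.
apply: eq_big => [j|j _]; first by rewrite inE.
rewrite expr2 mulrA; have /rowP/(_ j) := eigv; rewrite !mxE => <-.
by rewrite mulr_suml; apply: eq_bigr => i _; rewrite mulrAC.
Qed.

Lemma sum_sqr_row_gt0 (R : realDomainType) (n : nat) (v : 'rV[R]_n) :
  v != 0 -> 0 < sum_sqr (v 0) setT.
Proof.
move=> nz_v; rewrite lt_def sum_sqr_ge0 andbT; apply: contra nz_v => /eqP sum0.
apply/eqP/rowP => j; apply/eqP; rewrite mxE -sqrf_eq0; apply/eqP.
by apply: (psumr_eq0P _ sum0) => [i _|]; rewrite ?inE ?sqr_ge0.
Qed.

Definition msubsets (T : finType) (m : nat) : {set {set T}} :=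
  [set S : {set T} | #|S| == m].

Lemma card_msubsets_mem1 (T : finType) (m : nat) (i : T) :
  (0 < m)%N -> #|[set S in msubsets T m | i \in S]| = 'C(#|T| - 1, m - 1).
Proof.
move=> m_gt0; rewrite -(cards1 i) -card_supsets_of_card ?cards1 //.
by apply: eq_card => S; rewrite !inE sub1set andbC.
Qed.

Lemma card_msubsets_mem2 (T : finType) (m : nat) (i j : T) :
  (1 < m)%N -> i != j ->
  #|[set S in msubsets T m | (i \in S) && (j \in S)]| = 'C(#|T| - 2, m - 2).
Proof.
move=> m_gt1 neij; have card_ij : #|[set i; j]| = 2%N by rewrite cards2 neij.
rewrite -card_ij -card_supsets_of_card ?card_ij //.
by apply: eq_card => S; rewrite !inE subUset !sub1set andbC.
Qed.

Lemma uniform_regular_sum_cross_ge (R : realDomainType) (n m k : nat)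
    (E : {set {set 'I_n}}) (x : 'I_n -> R) :
  (2 <= m)%N -> uniform m E -> regular k E ->
  - ('C(n - 2, m - 2)%:R + (m - 1)%:R * ('C(n - 1, m - 1)%:R - k%:R)) * sum_sqr x setT
    <= \sum_(e in E) sum_cross x e.
Proof.
move=> m_ge2 unifE regE; set U := msubsets 'I_n m.
have UE : U :&: E = E by apply/setIidPr/subsetP => e eE; rewrite inE unifE.
have splitU F : \sum_(S in U) F S = \sum_(S in E) F S + \sum_(S in U :\: E) F S :> R.
  by rewrite (big_setID E) /= UE.
have sumU_cross : \sum_(S in E) sum_cross x S + \sum_(S in U :\: E) sum_cross x S =
                  'C(n - 2, m - 2)%:R * sum_cross x setT.
  rewrite -splitU mulr_natl; apply: sum_sum_cross => i j neij.
  by rewrite card_msubsets_mem2 ?card_ord.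
have sumU_sqr : \sum_(S in E) sum_sqr x S + \sum_(S in U :\: E) sum_sqr x S =
                'C(n - 1, m - 1)%:R * sum_sqr x setT.
  rewrite -splitU mulr_natl; apply: sum_sum_sqr => i.
  by rewrite card_msubsets_mem1 ?card_ord // ltnW.
have sumE_sqr : \sum_(S in E) sum_sqr x S = k%:R * sum_sqr x setT.
  by rewrite mulr_natl; apply: sum_sum_sqr.
have rest_sqr : \sum_(S in U :\: E) sum_sqr x S =
                ('C(n - 1, m - 1)%:R - k%:R) * sum_sqr x setT.
  by rewrite mulrBl -sumU_sqr sumE_sqr addrC addKr.
have rest_le : \sum_(S in U :\: E) sum_cross x S <=
               (m - 1)%:R * (('C(n - 1, m - 1)%:R - k%:R) * sum_sqr x setT).
  rewrite -rest_sqr mulr_sumr; apply: ler_sum => S; rewrite !inE => /andP[_ /eqP <-].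
  exact: sum_cross_le.
have cross_ge : - ('C(n - 2, m - 2)%:R * sum_sqr x setT) <=
                'C(n - 2, m - 2)%:R * sum_cross x setT.
  by rewrite -mulrN ler_wpM2l ?sum_cross_ge.
lra.
Qed.

Theorem proposition1 (R : rcfType) (n m k : nat) (E : {set {set 'I_n}}) :
  is_hypergraph E -> (2 <= m)%N -> uniform m E -> regular k E ->
  let theta : R := 'C(n - 2, m - 2)%:R / (m - 1)%:R in
  forall lambda : R, eigenvalue (hadj R E) lambda ->
    k%:R - theta - 'C(n - 1, m - 1)%:R <= lambda.
Proof.
(* is_hypergraph E is implied by uniform m E and 2 <= m. *)
move=> _ m_ge2 unifE regE theta lambda /eigenvalueP[v eigv nz_v].
have sqr_gt0 := sum_sqr_row_gt0 nz_v.
have m1_gt0 : 0 < (m - 1)%:R :> R by rewrite ltr0n subn_gt0.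
have rayleigh :
    (m - 1)%:R * (lambda * sum_sqr (v 0) setT) = \sum_(e in E) sum_cross (v 0) e.
  rewrite -(eigenvector_quadratic_form eigv) hadj_quadratic_form mulr_sumr.
  by apply: eq_bigr => e eE; rewrite (unifE e eE) mulVKf ?lt0r_neq0.
have := uniform_regular_sum_cross_ge (v 0) m_ge2 unifE regE.
rewrite -rayleigh mulrA [_ * lambda]mulrC ler_pM2r // -ler_pdivrMr //.
suff -> : k%:R - theta - 'C(n - 1, m - 1)%:R =
  - ('C(n - 2, m - 2)%:R + (m - 1)%:R * ('C(n - 1, m - 1)%:R - k%:R)) / (m - 1)%:R by [].
by rewrite /theta; field; rewrite lt0r_neq0.
Qed.
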